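(* Let $u$ and $v$ be vertices of $G$ and let $P(u,v)=(u=x_1,\dots,x_p=v)$ be the path from $u$ to $v$ in $T$. Suppose the routing steps of a single case of the routing algorithm are executed (when routing from $u$ to $v$) and vertices $w_1$ and $w_2$ are visited. Then there are indices $1\le i_1\le i_2\le p$ such that $w_1=x_{i_1}$ and $w_2=x_{i_2}$.
   Context: Let $T$ be a rooted tree on $n$ vertices with positive edge weights; $P(a,b)$ is the path in $T$ from $a$ to $b$ and $\delta_T(a,b)$ its weight. Ancestor/descendant refer to $T$, and a vertex counts as its own ancestor and descendant; ''deepest''/''highest'' refer to depth in $T$. $T_v$ is the subtree of $T$ rooted at $v$. For every non-leaf vertex $v$ fix a child $c_1(v)$ with $|T_{c_1(v)}|$ maximal; edges $(v,c_1(v))$ are leftmost. A subtree $R$ of $T$ is rooted at its vertex closest to the root, $rt(R)$, and inherits the leftmost labelling; $R_v$ is the subtree of $R$ rooted at $v$. $P_R(v)$ is the longest downward path from $v$ in $R$ using only leftmost edges, with last vertex $l(v)$; $l(R):=l(rt(R))$. A vertex $v$ of $R$ is $d$-balanced if $|R_{c_1(v)}|\le |R|-d$ (with $|R_{c_1(v)}|=0$ if $c_1(v)$ is undefined or not in $R$); $b_d(v)$ is the first $d$-balanced vertex on $P_R(v)$, or NULL. $CV(R,d)=\emptyset$ if $b_d(rt(R))$ is NULL, else $\{b\}\cup\bigcup_w CV(R_w,d)$ with $b=b_d(rt(R))$ and $w$ ranging over children of $b$ in $R$. Fix an integer $k\ge4$; for a subtree $R$ with $m$ vertices, $C_R=V(R)$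 if $k\ge m/2-1$, else $C_R=CV(R,m/k)\cup\{l(R),rt(R)\}$. Canonical subtrees: $T$ is canonical; if $R$ is canonical, each component of $R$ minus $C_R$ is canonical. Each vertex $v$ lies in $C_R$ for exactly one canonical $R$, denoted $T^v$. The spanner $G$ has vertex set $V(T)$ and edges: all edges of $T$, and all pairs of distinct vertices of $C_R$ for every canonical $R$; edge $(a,b)$ has weight $\delta_T(a,b)$. Routing algorithm from current vertex $u$ to destination $v$: Case 0: if $v$ is adjacent to $u$, move to $v$. Case 1: $u$ is an ancestor of $v$; let $X$ be the vertices of $C_{T^u}$ that are ancestors of $v$, $x$ the deepest; move to $x$, then to the child of $x$ that is an ancestor of $v$. Case 2: $u$ is a descendant of $v$; let $X$ be the vertices of $C_{T^u}$ that are descendants of $v$ and ancestors of $u$, $x$ the highest; move to $x$, then to the parent of $x$. Case 3: $u$ is neither; let $X$ be the vertices of $C_{T^u}$ that are ancestors of $v$ but not of $u$, and $Y$ those that are ancestors of $u$ but not of $v$, $y$ the highest vertex of $Y$. Case 3 a): $X=\emptyset$: move to $y$, then to the parent of $y$. Case 3 b): $X\neq\emptyset$: with $x$ the deepest vertex of $X$ and $x'$ the child of $x$ that is an ancestor of $v$, move to $x$, then to $x'$. (Moving to the current vertex means staying.) *)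

From mathcomp Require Import all_boot all_order all_algebra.
Set Implicit Arguments. Unset Strict Implicit. Unset Printing Implicit Defensive.
Import Order.TTheory GRing.Theory Num.Theory.

(* A rooted tree on the finite vertex type V is given by a parent map [par]
   and a root [r] (with par r = r).  [c1 v] is the fixed heavy child of v
   (None iff v is a leaf).  Edge weights play no role in the routing
   decisions nor in the statement, so they are omitted. *)
Section Routing.
Variable V : finType.
Variable par : V -> V.
Variable r : V.
Variable c1 : V -> option V.

Definition anc (a x : V) : bool := fconnect par x a.
Definition child (x y : V) : bool := (y != r) && (par y == x).
Definition Tsub (v : V) : {set V} := [set x | anc v x].
Definition depth (x : V) : nat := #|[set a | anc a x]|.
Definition adjT (a b : V) : bool := child b a || child a b.

Definition is_rooted_tree : Prop := par r = r /\ forall v, anc r v.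

Definition leftmost_choice : Prop :=
  forall v, match c1 v with
            | Some c => child v c /\ forall c', child v c' -> #|Tsub c'| <= #|Tsub c|
            | None => forall c', ~~ child v c'
            end.

(* z lies on the tree path P(x,y) *)
Definition onpath (z x y : V) : bool :=
  (anc z x || anc z y) && [forall a, (anc a x && anc a y) ==> anc a z].

Definition tconnected (S : {set V}) : Prop :=
  S != set0 /\ forall x y z, x \in S -> y \in S -> onpath z x y -> z \in S.

Definition tpath (u v : V) (s : seq V) : bool :=
  if s is x :: s' then [&& x == u, path adjT x s', last x s' == v & uniq s]
  else false.

Definition subR (R : {set V}) (v : V) : {set V} := R :&: Tsub v.
Definition is_rt (R : {set V}) (x : V) : Prop := x \in R /\ (x = r \/ par x \notin R).
(* one step along a leftmost edge inside R (stays put at the end of P_R) *)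
Definition lstep (R : {set V}) (x : V) : V :=
  if c1 x is Some c then (if c \in R then c else x) else x.
Definition is_l (R : {set V}) (x : V) : Prop :=
  exists t i, [/\ is_rt R t, iter i (lstep R) t = x & lstep R x = x].
Definition csize (R : {set V}) (v : V) : nat :=
  if c1 v is Some c then (if c \in R then #|subR R c| else 0) else 0.
Definition balanced (R : {set V}) (d : rat) (v : V) : bool :=
  ((csize R v)%:R <= (#|R|%:R - d))%R.
(* b = b_d(v) : first d-balanced vertex on P_R(v) (no such b means NULL) *)
Definition is_bd (R : {set V}) (d : rat) (v b : V) : Prop :=
  exists i, [/\ iter i (lstep R) v = b, balanced R d b &
                forall j, j < i -> ~~ balanced R d (iter j (lstep R) v)].

Inductive inCV (d : rat) : {set V} -> V -> Prop :=
| CV_here R t b : is_rt R t -> is_bd R d t b -> inCV d R b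
| CV_rec R t b w x : is_rt R t -> is_bd R d t b -> w \in R -> child b w ->
    inCV d (subR R w) x -> inCV d R x.

(* x \in C_R ;  k >= m/2 - 1  <->  m <= 2k + 2 *)
Definition inC (k : nat) (R : {set V}) (x : V) : Prop :=
  if #|R| <= k.*2 + 2 then is_true (x \in R)
  else [\/ inCV ((#|R|%:R / k%:R)%R) R x, is_l R x | is_rt R x].

Definition component (A : V -> Prop) (S : {set V}) : Prop :=
  [/\ tconnected S, forall x, x \in S -> A x &
      forall S' : {set V}, S \subset S' -> (forall x, x \in S' -> A x) -> tconnected S' -> S' = S].

Inductive canonical (k : nat) : {set V} -> Prop :=
| can_T : canonical k [set: V]
| can_comp R S : canonical k R ->
    component (fun x => x \in R /\ ~ inC k R x) S -> canonical k S.

Definition adjG (k : nat) (u v : V) : Prop :=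
  adjT u v \/ (u <> v /\ exists R, [/\ canonical k R, inC k R u & inC k R v]).

Definition deepest (X : V -> Prop) (x : V) : Prop :=
  X x /\ forall y, X y -> depth y <= depth x.
Definition highest (X : V -> Prop) (x : V) : Prop :=
  X x /\ forall y, X y -> depth x <= depth y.

(* [route k u v ws]: executing the steps of one case of the routing
   algorithm at u (destination v) visits, in order, the vertices ws
   (starting with the current vertex u).  R plays the role of T^u. *)
Definition route (k : nat) (u v : V) (ws : seq V) : Prop :=
     (adjG k u v /\ ws = [:: u; v]) \/
      (~ adjG k u v /\ anc u v /\
      exists R x x', [/\ canonical k R, inC k R u,
        deepest (fun y => inC k R y /\ anc y v) x,
        child x x' /\ anc x' v & ws = [:: u; x; x']]) \/
      (~ adjG k u v /\ anc v u /\
      exists R x, [/\ canonical k R, inC k R u,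
        highest (fun y => [/\ inC k R y, anc v y & anc y u]) x &
        ws = [:: u; x; par x]]) \/
      (~ adjG k u v /\ ~~ anc u v /\ ~~ anc v u /\
      exists R y, [/\ canonical k R, inC k R u,
        (forall x, ~ [/\ inC k R x, anc x v & ~~ anc x u]),
        highest (fun y => [/\ inC k R y, anc y u & ~~ anc y v]) y &
        ws = [:: u; y; par y]]) \/
      (~ adjG k u v /\ ~~ anc u v /\ ~~ anc v u /\
      exists R x x', [/\ canonical k R, inC k R u,
        deepest (fun y => [/\ inC k R y, anc y v & ~~ anc y u]) x,
        child x x' /\ anc x' v & ws = [:: u; x; x']]).

End Routing.

From Pilot Require Import Defs.
From mathcomp Require Import all_boot all_order all_algebra.
Set Implicit Arguments. Unset Strict Implicit. Unset Printing Implicit Defensive.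

(* Every case of the routing algorithm first jumps to a vertex x lying on
   P(u,v) and then takes the tree edge at x that leads towards v.  Hence each
   visited vertex lies on P(u,v), and on P(u,w) for every vertex w visited
   after it.  The path s = P(u,v) is a walk along tree edges, and a walk from u
   passes through every vertex of P(u,w) before (or when) it first reaches w;
   this gives the indices. *)

Section TreePaths.

Variables (V : finType) (par : V -> V) (r : V).
Hypothesis tree : is_rooted_tree par r.

Local Notation anc := (anc par).
Local Notation onpath := (onpath par).

Lemma ancP a x : reflect (exists n, iter n par x = a) (anc a x).
Proof.
apply: (iffP idP) => [h|[n <-]]; last exact: fconnect_iter.
by exists (findex par x a); apply: iter_findex.
Qed.

Lemma anc_refl x : anc x x.
Proof. exact: connect0. Qed.

Lemma anc_trans a b c : anc a b -> anc b c -> anc a c.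
Proof. by move=> hab hbc; apply: connect_trans hbc hab. Qed.

Lemma anc_par x : anc (par x) x.
Proof. exact: fconnect1. Qed.

Lemma ancE a y : anc a y = (a == y) || anc a (par y).
Proof.
apply/idP/predU1P => [|[->|h]]; last exact: anc_trans h (anc_par y).
  by case/ancP => [[|n]] <-; [left | right; apply/ancP; exists n; rewrite iterSr].
exact: anc_refl.
Qed.

Lemma anc_total a b x : anc a x -> anc b x -> anc a b || anc b a.
Proof.
case/ancP => n <-; case/ancP => m <-; case: (leqP n m) => [hnm|/ltnW hmn].
  by apply/orP; right; apply/ancP; exists (m - n); rewrite -iterD subnK.
by apply/orP; left; apply/ancP; exists (n - m); rewrite -iterD subnK.
Qed.

Lemma anc_antisym a b : anc a b -> anc b a -> a = b.
Proof.
case: tree => hr anc_r /ancP [n hn] /ancP [m hm].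
have cycle_b j : iter (j * (m + n)) par b = b.
  by elim: j => // j IH; rewrite mulSn iterD IH iterD hn hm.
have iter_r i : iter i par r = r by elim: i => //= i ->.
case: (posnP (m + n)) => [/eqP|m_n_gt0].
  by rewrite addn_eq0 => /andP [_ /eqP n0]; rewrite -hn n0.
have b_r : b = r.
  case/ancP: (anc_r b) => p hp.
  by rewrite -(cycle_b p) -(subnK (leq_pmulr p m_n_gt0)) iterD hp iter_r.
by rewrite -hn b_r iter_r.
Qed.

Lemma par_fixed_root x : par x = x -> x = r.
Proof.
move=> fix_x; case: tree => _ /(_ x) /ancP [n <-].
by elim: n => //= n <-; rewrite fix_x.
Qed.

Lemma child_not_anc x y : child par r x y -> ~~ anc y x.
Proof.
case/andP => y_neq_r /eqP par_y; apply/negP => y_anc_x.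
have x_y : x = y by apply: anc_antisym y_anc_x; rewrite -par_y anc_par.
by move: par_y y_neq_r; rewrite x_y => /par_fixed_root ->; rewrite eqxx.
Qed.

Lemma anc_depth_lt a x : anc a x -> a != x -> depth par a < depth par x.
Proof.
move=> a_x a_neq_x; apply/proper_card/properP; split.
  by apply/subsetP => c; rewrite !inE => /anc_trans; apply.
exists x; rewrite !inE ?anc_refl //.
by apply: contra a_neq_x => /(anc_antisym a_x) ->.
Qed.

Lemma onpathP z x y :
  reflect ((anc z x || anc z y) /\ forall c, anc c x -> anc c y -> anc c z)
          (onpath z x y).
Proof.
apply: (iffP andP) => [[zxy /forallP common]|[zxy common]]; split => //.
  by move=> c cx cy; move/implyP: (common c); apply; rewrite cx.
by apply/forallP => c; apply/implyP => /andP [/common]; apply.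
Qed.

Lemma onpathC z x y : onpath z x y = onpath z y x.
Proof.
rewrite /Defs.onpath orbC; congr (_ && _).
by apply: eq_forallb => c; rewrite andbC.
Qed.

Lemma onpath_source x y : onpath x x y.
Proof. by apply/onpathP; rewrite anc_refl; split. Qed.

Lemma onpath_target x y : onpath y x y.
Proof. by rewrite onpathC onpath_source. Qed.

Lemma onpath_between x u v : anc u x -> anc x v -> onpath x u v.
Proof.
move=> u_x x_v; apply/onpathP; rewrite x_v orbT; split=> // c c_u _.
exact: anc_trans u_x.
Qed.

Lemma onpath_anc_l x u v : anc x u -> ~~ anc x v -> onpath x u v.
Proof.
move=> x_u x_nv; apply/onpathP; rewrite x_u; split=> // c c_u c_v.
case/orP: (anc_total c_u x_u) => // x_c.
by rewrite (anc_trans x_c c_v) in x_nv.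
Qed.

Lemma onpath_anc_r x u v : anc x v -> ~~ anc x u -> onpath x u v.
Proof. by rewrite onpathC; apply: onpath_anc_l. Qed.

Lemma onpath_par w x y : onpath w x y -> w != x -> onpath w (par x) y.
Proof.
case/onpathP=> w_xy common w_neq_x; apply/onpathP; split.
  by rewrite ancE (negPf w_neq_x) in w_xy.
by move=> c c_px; apply: common; apply: anc_trans c_px (anc_par x).
Qed.

Lemma onpath_child w x x' y :
  child par r x x' -> onpath w x y -> w != x -> onpath w x' y.
Proof.
case/andP=> _ /eqP par_x' /onpathP [w_xy common] w_neq_x.
have x_x' : anc x x' by rewrite -par_x' anc_par.
apply/onpathP; split.
  by case/orP: w_xy => [/anc_trans/(_ x_x') ->|->]; rewrite ?orbT.
move=> c; rewrite [anc c x']ancE par_x' => /predU1P [-> x'_y|c_x c_y].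
  have x_w : anc x w := common x (anc_refl x) (anc_trans x_x' x'_y).
  have w_nx : ~~ anc w x.
    by apply: contra w_neq_x => /anc_antisym/(_ x_w) ->.
  have w_y : anc w y by move: w_xy; rewrite (negPf w_nx).
  case/orP: (anc_total x'_y w_y) => // w_x'.
  move: w_x'; rewrite ancE par_x' (negPf w_nx) orbF => /eqP ->.
  exact: anc_refl.
exact: common.
Qed.

Lemma onpath_mem_walk x p w :
  path (adjT par r) x p -> onpath w x (last x p) -> w \in x :: p.
Proof.
elim: p x => [|y p IH] x /=.
  move=> _ /onpathP [w_x common]; rewrite orbb in w_x.
  by rewrite inE (anc_antisym w_x (common x (anc_refl x) (anc_refl x))).
case/andP => x_y y_p w_on; rewrite inE; case: eqVneq => //= w_neq_x.
apply: IH y_p _; case/orP: x_y => [/andP [_ /eqP par_x]|x_y].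
  by rewrite -{1}par_x; apply: onpath_par w_on w_neq_x.
exact: onpath_child x_y w_on w_neq_x.
Qed.

Lemma tpath_visits_in_order u v s w1 w2 :
  tpath par r u v s -> onpath w1 u w2 -> onpath w2 u v ->
  exists i1 i2, [/\ (i1 <= i2 < size s)%N, nth u s i1 = w1 & nth u s i2 = w2].
Proof.
case: s => // x s' /and4P [/eqP -> walk_s /eqP last_s _] w1_on w2_on.
have w2_in : w2 \in u :: s' by apply: onpath_mem_walk walk_s _; rewrite last_s.
case/splitPl: w2_in walk_s => p1 p2 last_p1; rewrite cat_path => /andP [walk_p1 _].
have w1_in : w1 \in u :: p1 by apply: onpath_mem_walk walk_p1 _; rewrite last_p1.
have i1_le : index w1 (u :: p1) <= size p1 by rewrite -ltnS index_mem.
exists (index w1 (u :: p1)), (size p1).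
have i2_lt : size p1 < size (u :: p1 ++ p2) by rewrite /= size_cat ltnS leq_addr.
rewrite i1_le i2_lt -cat_cons !nth_cat !ltnS i1_le leqnn nth_index //.
by rewrite -last_p1 (last_nth u).
Qed.

Definition visits_in_order (u v : V) (ws : seq V) : Prop :=
  forall j1 j2, j1 <= j2 < size ws ->
  onpath (nth u ws j1) u (nth u ws j2) /\ onpath (nth u ws j2) u v.

Lemma visits_in_order_pair u v : visits_in_order u v [:: u; v].
Proof.
by case=> [|[|?]] [|[|?]] /andP [_] //= _;
  split; rewrite ?onpath_source ?onpath_target.
Qed.

Lemma visits_in_order_triple u v b c :
  onpath b u v -> onpath c u v -> onpath b u c ->
  visits_in_order u v [:: u; b; c].
Proof.
move=> b_uv c_uv b_uc.
case=> [|[|[|?]]] [|[|[|?]]] /andP [_] //= _;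
  by split; rewrite ?onpath_source ?onpath_target.
Qed.

Lemma visits_in_order_down u v x x' :
  onpath x u v -> child par r x x' -> anc x' v -> ~~ anc x' u ->
  visits_in_order u v [:: u; x; x'].
Proof.
move=> x_uv /andP [_ /eqP par_x'] x'_v x'_nu.
have x_x' : anc x x' by rewrite -par_x' anc_par.
case/onpathP: (x_uv) => _ common.
apply: visits_in_order_triple x_uv _ _; apply/onpathP; rewrite ?x'_v ?x_x' ?orbT.
  by split=> // c c_u /(common c c_u) /anc_trans; apply.
split=> // c c_u; rewrite [anc c x']ancE par_x' => /predU1P [c_x'|] //.
by rewrite -c_x' c_u in x'_nu.
Qed.

Lemma visits_in_order_up u v y :
  onpath y u v -> ~~ anc y v -> visits_in_order u v [:: u; y; par y].
Proof.
move=> y_uv y_nv; case/onpathP: (y_uv) => y_uv' common.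
have y_u : anc y u by move: y_uv'; rewrite (negPf y_nv) orbF.
apply: visits_in_order_triple y_uv _ _; apply/onpathP.
  rewrite (anc_trans (anc_par y) y_u); split=> // c c_u c_v.
  move: (common c c_u c_v); rewrite ancE => /predU1P [c_y|] //.
  by rewrite -c_y c_v in y_nv.
by rewrite y_u; split=> // c _ /anc_trans; apply; apply: anc_par.
Qed.

Variables (c1 : V -> option V) (k : nat).

Lemma route_visits_in_order u v ws :
  u != v -> route par r c1 k u v ws -> visits_in_order u v ws.
Proof.
move=> u_neq_v.
case=> [[_ ->]|[[_ [u_v case1]]|[[not_adj [_ case2]]|[[_ [_ [_ case3a]]]|
        [_ [_ [_ case3b]]]]]]].
- exact: visits_in_order_pair.
- case: case1 => R [x [x' [_ u_C [[_ x_v] deepest_x] [x_x' x'_v] ->]]].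
  have u_x : anc u x.
    case/orP: (anc_total u_v x_v) => // x_u.
    have [-> | x_neq_u] := eqVneq x u; first exact: anc_refl.
    by move: (deepest_x u (conj u_C u_v)); rewrite leqNgt anc_depth_lt.
  have x'_nu : ~~ anc x' u.
    by apply: contra (child_not_anc x_x') => /anc_trans; apply.
  exact: visits_in_order_down (onpath_between u_x x_v) x_x' x'_v x'_nu.
- case: case2 => R [x [R_can u_C [[x_C v_x x_u] _] ->]].
  (* x = v would put u and v in the same C_R, making them adjacent in G. *)
  have x_nv : ~~ anc x v.
    apply/negP => x_v; apply: not_adj; right; split; first exact/eqP.
    by exists R; rewrite -(anc_antisym x_v v_x).
  exact: visits_in_order_up (onpath_anc_l x_u x_nv) x_nv.
- case: case3a => R [y [_ _ _ [[_ y_u y_nv] _] ->]].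
  exact: visits_in_order_up (onpath_anc_l y_u y_nv) y_nv.
- case: case3b => R [x [x' [_ _ [[_ x_v x_nu] _] [x_x' x'_v] ->]]].
  have x'_nu : ~~ anc x' u.
    apply: contra x_nu; apply: anc_trans.
    by case/andP: x_x' => _ /eqP <-; apply: anc_par.
  exact: visits_in_order_down (onpath_anc_r x_v x_nu) x_x' x'_v x'_nu.
Qed.

End TreePaths.

Theorem lemma12 (V : finType) (par : V -> V) (r : V) (c1 : V -> option V)
  (k : nat) (u v : V) (ws s : seq V) :
  is_rooted_tree par r -> leftmost_choice par r c1 -> (4 <= k)%N ->
  u != v -> route par r c1 k u v ws -> tpath par r u v s ->
  forall j1 j2, (j1 <= j2 < size ws)%N ->
  exists i1 i2, [/\ (i1 <= i2 < size s)%N, nth u s i1 = nth u ws j1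
                  & nth u s i2 = nth u ws j2].
Proof.
move=> tree _ _ u_neq_v route_ws s_uv j1 j2 j12.
have [w1_on w2_on] := route_visits_in_order tree u_neq_v route_ws j12.
exact: (tpath_visits_in_order tree s_uv w1_on w2_on).
Qed.
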